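(* Let $N_b, N_g, L, M, P$ be positive integers. For $\ell=1,\dots,L$ let $\mathbf{L}_\ell\in\mathbb{R}^{2N_b\times 2N_b}$ be symmetric, $\mathbf{a}_\ell\in\mathbb{R}^{2N_g}$, $\mathbf{b}_\ell\in\mathbb{R}^{P}$; for $m=1,\dots,M$ let $\mathbf{M}_m\in\mathbb{R}^{2N_b\times 2N_b}$ be symmetric, $\mathbf{d}_m\in\mathbb{R}^P$, $f_m\in\mathbb{R}$; and let $\mathbf{a}_0\in\mathbb{R}^{2N_g}$. For a parameter $\boldsymbol{\theta}\in\mathbb{R}^P$ consider the parametric quadratically constrained quadratic program $$\min_{\mathbf{v}\in\mathbb{R}^{2N_b},\,\mathbf{x}_g\in\mathbb{R}^{2N_g}}\ \mathbf{a}_0^\top\mathbf{x}_g\quad\text{s.t.}\quad \mathbf{v}^\top\mathbf{L}_\ell\mathbf{v}=\mathbf{a}_\ell^\top\mathbf{x}_g+\mathbf{b}_\ell^\top\boldsymbol{\theta}\ (\ell=1,\dots,L),\qquad \mathbf{v}^\top\mathbf{M}_m\mathbf{v}\le \mathbf{d}_m^\top\boldsymbol{\theta}+f_m\ (m=1,\dots,M),$$ with multipliers $\lambda_\ell$ for the equality constraints and $\mu_m$ for the inequality constraints. Let $(\mathbf{v},\mathbf{x}_g,\boldsymbol{\lambda},\boldsymbol{\mu})$ be a tuple of (locally) optimal primal/dual variables for a given $\boldsymbol{\theta}$, satisfying the first-order optimality conditions: primal feasibility, $\mathbf{Z}\mathbf{v}=\mathbf{0}$ with $\mathbf{Z}:=\sum_{\ell=1}^L\lambda_\ell\mathbf{L}_\ell+\sum_{m=1}^M\mu_m\mathbf{M}_m$,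 $\mathbf{a}_0=\sum_{\ell=1}^L\lambda_\ell\mathbf{a}_\ell$, $\mu_m g_m=0$ and $\mu_m\ge 0$ for all $m$, where $g_m:=\mathbf{v}^\top\mathbf{M}_m\mathbf{v}-\mathbf{d}_m^\top\boldsymbol{\theta}-f_m$. Assume: (i) (strict complementarity) for every $m$, $g_m=0$ if and only if $\mu_m>0$; (ii) (second-order condition) with $\mathcal{A}:=\{m: g_m=0\}$, $\nabla_{\mathbf{x}}h_\ell:=\begin{bmatrix}2\mathbf{L}_\ell\mathbf{v}\\-\mathbf{a}_\ell\end{bmatrix}$, $\nabla_{\mathbf{x}}g_m:=\begin{bmatrix}2\mathbf{M}_m\mathbf{v}\\\mathbf{0}\end{bmatrix}$, $\nabla^2_{\mathbf{x}\mathbf{x}}\mathcal{L}:=\begin{bmatrix}\mathbf{Z}&\mathbf{0}\\\mathbf{0}&\mathbf{0}\end{bmatrix}$ and $\mathcal{Z}:=\{\mathbf{z}\in\mathbb{R}^{2N_b+2N_g}:\mathbf{z}^\top\nabla_{\mathbf{x}}h_\ell=0\ \forall\ell,\ \mathbf{z}^\top\nabla_{\mathbf{x}}g_m=0\ \forall m\in\mathcal{A}\}$, it holds that $\mathbf{z}^\top\nabla^2_{\mathbf{x}\mathbf{x}}\mathcal{L}\,\mathbf{z}>0$ for all $\mathbf{z}\in\mathcal{Z}\setminus\{\mathbf{0}\}$. Define the square matrix of size $2N_b+2N_g+L+M$ $$\mathbf{S}:=\begin{bmatrix}\mathbf{Z}&\mathbf{0}&\mathbf{L}_\lambda&\mathbf{M}_\mu\\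 \mathbf{0}&\mathbf{0}&\mathbf{A}^\top&\mathbf{0}\\ 2\mathbf{L}_\lambda^\top&-\mathbf{A}&\mathbf{0}&\mathbf{0}\\ 2\mathcal{D}(\boldsymbol{\mu})\mathbf{M}_\mu^\top&\mathbf{0}&\mathbf{0}&\mathcal{D}(\mathbf{g})\end{bmatrix},$$ where $\mathbf{L}_\lambda:=\sum_{\ell=1}^L\mathbf{L}_\ell\mathbf{v}\mathbf{e}_\ell^\top\in\mathbb{R}^{2N_b\times L}$, $\mathbf{M}_\mu:=\sum_{m=1}^M\mathbf{M}_m\mathbf{v}\mathbf{e}_m^\top\in\mathbb{R}^{2N_b\times M}$, $\mathbf{A}\in\mathbb{R}^{L\times 2N_g}$ is the matrix whose $\ell$-th row is $\mathbf{a}_\ell^\top$, $\mathbf{g}:=(g_1,\dots,g_M)$, and $\mathcal{D}(\cdot)$ denotes the diagonal matrix with the given vector on its diagonal. Then for every $\mathbf{n}\in\operatorname{null}(\mathbf{S})$, the entries $n_i$ for $i=1,\dots,2(N_b+N_g)$ are zero.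
   Context: This problem is an abstraction of the AC optimal power flow: $\mathbf{v}$ stacks real and imaginary parts of bus voltages, $\mathbf{x}_g$ stacks generator active/reactive power injections, and $\boldsymbol{\theta}$ stacks inflexible load demands. $\mathbf{e}_k$ denotes the $k$-th canonical basis vector of appropriate dimension. The conclusion means that the first $2(N_b+N_g)$ coordinates (those corresponding to $(\mathbf{v},\mathbf{x}_g)$) of any vector in the null space of $\mathbf{S}$ vanish, so that the primal sensitivities obtained from the linear system $\mathbf{S}\boldsymbol{\gamma}=\mathbf{u}$ are uniquely determined even when $\mathbf{S}$ is singular. *)

From mathcomp Require Import all_boot all_order all_algebra.
Set Implicit Arguments. Unset Strict Implicit. Unset Printing Implicit Defensive.
Import Order.TTheory GRing.Theory Num.Theory.
Local Open Scope ring_scope.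

Section QCQP.
Variables (R : realFieldType) (Nb Ng L M P : nat).
Variables (Lm : 'I_L -> 'M[R]_(2 * Nb)) (a : 'I_L -> 'cV[R]_(2 * Ng))
          (b : 'I_L -> 'cV[R]_P).
Variables (Mm : 'I_M -> 'M[R]_(2 * Nb)) (d : 'I_M -> 'cV[R]_P) (f : 'I_M -> R).
Variables (a0 : 'cV[R]_(2 * Ng)) (theta : 'cV[R]_P).

Definition bilin n (x : 'cV[R]_n) (A : 'M[R]_n) (y : 'cV[R]_n) : R :=
  (x^T *m A *m y) 0 0.
Definition dotv n (x y : 'cV[R]_n) : R := (x^T *m y) 0 0.

Definition hcon (l : 'I_L) (v : 'cV[R]_(2 * Nb)) (xg : 'cV[R]_(2 * Ng)) : R :=
  bilin v (Lm l) v - dotv (a l) xg - dotv (b l) theta.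
Definition gcon (m : 'I_M) (v : 'cV[R]_(2 * Nb)) : R :=
  bilin v (Mm m) v - dotv (d m) theta - f m.

Definition feasible v xg : Prop :=
  (forall l, hcon l v xg = 0) /\ (forall m, gcon m v <= 0).

Definition locally_optimal v xg : Prop :=
  feasible v xg /\
  exists eps : R, 0 < eps /\
    forall v' xg', feasible v' xg' ->
      (forall i, `|v' i 0 - v i 0| < eps) ->
      (forall j, `|xg' j 0 - xg j 0| < eps) ->
      dotv a0 xg <= dotv a0 xg'.

Definition Zmat (lam : 'I_L -> R) (mu : 'I_M -> R) : 'M[R]_(2 * Nb) :=
  \sum_(l < L) lam l *: Lm l + \sum_(m < M) mu m *: Mm m.

Definition KKT v xg (lam : 'I_L -> R) (mu : 'I_M -> R) : Prop :=
  [/\ feasible v xg,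
      Zmat lam mu *m v = 0,
      a0 = \sum_(l < L) lam l *: a l,
      forall m, mu m * gcon m v = 0 &
      forall m, 0 <= mu m].

Definition grad_h (l : 'I_L) (v : 'cV[R]_(2 * Nb)) : 'cV[R]_(2 * Nb + 2 * Ng) :=
  col_mx (2 *: (Lm l *m v)) (- a l).
Definition grad_g (m : 'I_M) (v : 'cV[R]_(2 * Nb)) : 'cV[R]_(2 * Nb + 2 * Ng) :=
  col_mx (2 *: (Mm m *m v)) 0.
Definition hessL (lam : 'I_L -> R) (mu : 'I_M -> R) : 'M[R]_(2 * Nb + 2 * Ng) :=
  block_mx (Zmat lam mu) 0 0 0.

Definition strict_compl v (mu : 'I_M -> R) : Prop :=
  forall m, gcon m v = 0 <-> 0 < mu m.

Definition SOSC v (lam : 'I_L -> R) (mu : 'I_M -> R) : Prop :=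
  forall z : 'cV[R]_(2 * Nb + 2 * Ng),
    (forall l, dotv z (grad_h l v) = 0) ->
    (forall m, gcon m v = 0 -> dotv z (grad_g m v) = 0) ->
    z != 0 -> 0 < bilin z (hessL lam mu) z.

Definition Llam (v : 'cV[R]_(2 * Nb)) : 'M[R]_(2 * Nb, L) :=
  \sum_(l < L) (Lm l *m v) *m (delta_mx l 0 : 'cV[R]_L)^T.
Definition Mmu (v : 'cV[R]_(2 * Nb)) : 'M[R]_(2 * Nb, M) :=
  \sum_(m < M) (Mm m *m v) *m (delta_mx m 0 : 'cV[R]_M)^T.
Definition Amat : 'M[R]_(L, 2 * Ng) := \matrix_(l < L, j < 2 * Ng) a l j 0.

Definition Smat v (lam : 'I_L -> R) (mu : 'I_M -> R)
  : 'M[R]_((2 * Nb + 2 * Ng) + (L + M)) :=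
  block_mx
    (block_mx (Zmat lam mu) 0 0 0)
    (block_mx (Llam v) (Mmu v) Amat^T 0)
    (block_mx (2 *: (Llam v)^T) (- Amat)
              (2 *: (diag_mx (\row_m mu m) *m (Mmu v)^T)) 0)
    (block_mx 0 0 0 (diag_mx (\row_m gcon m v))).
End QCQP.

From mathcomp Require Import all_boot all_order all_algebra.
Set Implicit Arguments. Unset Strict Implicit. Unset Printing Implicit Defensive.
Import Order.TTheory GRing.Theory Num.Theory.
Local Open Scope ring_scope.

(* Split a null vector of S as (z1, z2, y, w). The third block row says that
   z = (z1, z2) is orthogonal to every grad h_l, and the fourth, read entrywise
   with strict complementarity, that z is orthogonal to every active grad g_m
   and that (M_mu^T z1)_m w_m = 0 for every m. Multiplying the first block row
   by z1^T then gives z^T (hess L) z = z1^T Z z1 = 0, since z1^T L_lambda y is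
   (z2^T A^T y) / 2 and A^T y = 0 by the second block row. The second-order
   condition now forces z = 0. *)

Lemma sum_mul_delta_tr (R : pzSemiRingType) p q (u : 'I_q -> 'cV[R]_p) :
  \sum_(j < q) u j *m (delta_mx j 0 : 'cV[R]_q)^T = \matrix_(i, k) u k i 0.
Proof.
apply/matrixP => i k; rewrite summxE (bigD1 k) //= big1 ?addr0.
  by rewrite !mxE big_ord1 !mxE !eqxx mulr1.
by move=> j /negbTE njk; rewrite !mxE big_ord1 !mxE eq_sym njk mulr0.
Qed.

Lemma strict_compl_mul_eq0 (R : numDomainType) (mu g s w : R) :
  mu * g = 0 -> (g = 0 <-> 0 < mu) -> mu * s + g * w = 0 ->
  (g = 0 -> s = 0) /\ s * w = 0.
Proof.
move=> mug0 sc eq0; have act : g = 0 -> s = 0.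
  move=> g0; have /lt0r_neq0 mu_neq0 : 0 < mu by apply/sc.
  move: eq0; rewrite g0 mul0r addr0 => /eqP.
  by rewrite mulf_eq0 (negbTE mu_neq0) => /eqP.
split=> //; have [/act -> | g_neq0] := eqVneq g 0; first by rewrite mul0r.
have mu0 : mu = 0 by move/eqP: mug0; rewrite mulf_eq0 (negbTE g_neq0) orbF => /eqP.
move: eq0; rewrite mu0 mul0r add0r => /eqP; rewrite mulf_eq0 (negbTE g_neq0) /=.
by move/eqP ->; rewrite mulr0.
Qed.

Section SensitivityMatrix.
Variables (R : realFieldType) (Nb Ng L M P : nat).
Variables (Lm : 'I_L -> 'M[R]_(2 * Nb)) (a : 'I_L -> 'cV[R]_(2 * Ng)).
Variables (Mm : 'I_M -> 'M[R]_(2 * Nb)) (d : 'I_M -> 'cV[R]_P) (f : 'I_M -> R).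
Variables (theta : 'cV[R]_P) (v : 'cV[R]_(2 * Nb)) (lam : 'I_L -> R) (mu : 'I_M -> R).

Local Notation Z := (Zmat Lm Mm lam mu).
Local Notation Ll := (Llam Lm v).
Local Notation Mu := (Mmu Mm v).
Local Notation A := (Amat a).
Local Notation g m := (gcon Mm d f theta m v).

Lemma Smat_mul_eq0 (z1 : 'cV[R]_(2 * Nb)) (z2 : 'cV[R]_(2 * Ng))
    (y : 'cV[R]_L) (w : 'cV[R]_M) :
  Smat Lm a Mm d f theta v lam mu *m col_mx (col_mx z1 z2) (col_mx y w) = 0 ->
  [/\ Z *m z1 + Ll *m y + Mu *m w = 0, A^T *m y = 0,
      2 *: (Ll^T *m z1) = A *m z2 &
      forall m, mu m * (2 * (Mu^T *m z1) m 0) + g m * w m 0 = 0].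
Proof.
rewrite /Smat !mul_block_col !mul0mx !addr0 !add0r.
move/eqP; rewrite col_mx_eq0 => /andP[/eqP top /eqP bot].
move/eqP: top; rewrite add_col_mx col_mx_eq0 add0r addrA => /andP[/eqP -> /eqP ->].
move/eqP: bot; rewrite add_col_mx col_mx_eq0 addr0 => /andP[/eqP row3 /eqP row4].
split=> //.
  by apply/eqP; rewrite -subr_eq0 scalemxAl -mulNmx; apply/eqP.
move=> m; have /matrixP/(_ m 0) := row4.
by rewrite -scalemxAl -mulmxA !mul_diag_mx !mxE mulrCA.
Qed.

Lemma dotv_grad_h z1 z2 l :
  dotv (col_mx z1 z2) (grad_h Lm a l v) = (2 *: (Ll^T *m z1) - A *m z2) l 0.
Proof.
rewrite /dotv /grad_h /Llam sum_mul_delta_tr tr_col_mx mul_row_col.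
rewrite -scalemxAr mulmxN !mxE.
by congr (2 * _ - _); apply: eq_bigr => j _; rewrite !mxE mulrC.
Qed.

Lemma dotv_grad_g z1 z2 m :
  dotv (col_mx z1 z2) (grad_g Ng Mm m v) = 2 * (Mu^T *m z1) m 0.
Proof.
rewrite /dotv /grad_g /Mmu sum_mul_delta_tr tr_col_mx mul_row_col mulmx0 addr0.
rewrite -scalemxAr !mxE; congr (2 * _).
by apply: eq_bigr => j _; rewrite !mxE mulrC.
Qed.

Lemma bilin_hessL z1 z2 :
  bilin (col_mx z1 z2) (hessL Ng Lm Mm lam mu) (col_mx z1 z2) = bilin z1 Z z1.
Proof.
rewrite /bilin /hessL tr_col_mx mul_row_block !mulmx0 !addr0.
by rewrite mul_row_col mul0mx addr0.
Qed.

Lemma bilin_Zmat_eq0 z1 z2 y w :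
  Z *m z1 + Ll *m y + Mu *m w = 0 -> A^T *m y = 0 -> 2 *: (Ll^T *m z1) = A *m z2 ->
  (forall m, (Mu^T *m z1) m 0 * w m 0 = 0) -> bilin z1 Z z1 = 0.
Proof.
move=> row1 row2 row3 cross.
have Zz1 : Z *m z1 = - (Ll *m y + Mu *m w).
  by apply/eqP; rewrite -addr_eq0 addrA row1.
have Ly0 : z1^T *m (Ll *m y) = 0.
  have -> : z1^T *m (Ll *m y) = (2^-1 *: (A *m z2))^T *m y.
    by rewrite -row3 scalerA mulVf ?pnatr_eq0 // scale1r trmx_mul trmxK mulmxA.
  by rewrite linearZ /= -scalemxAl trmx_mul -mulmxA row2 mulmx0 scaler0.
have Mw0 : (z1^T *m (Mu *m w)) 0 0 = 0.
  rewrite mulmxA -[Mu]trmxK -trmx_mul mxE; apply: big1 => m _.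
  by rewrite mxE; exact: cross.
by rewrite /bilin -mulmxA Zz1 mulmxN mulmxDr Ly0 add0r mxE Mw0 oppr0.
Qed.

Hypothesis compl : forall m, mu m * g m = 0.
Hypothesis sc : strict_compl Mm d f theta v mu.
Hypothesis sosc : SOSC Lm a Mm d f theta v lam mu.

Lemma Smat_null_primal_eq0 (z : 'cV[R]_(2 * Nb + 2 * Ng)) (yw : 'cV[R]_(L + M)) :
  Smat Lm a Mm d f theta v lam mu *m col_mx z yw = 0 -> z = 0.
Proof.
rewrite -(vsubmxK z) -(vsubmxK yw).
move: (usubmx z) (dsubmx z) (usubmx yw) (dsubmx yw) => z1 z2 y w.
move=> /Smat_mul_eq0[row1 row2 row3 row4].
have two_neq0 : (2 : R) != 0 by rewrite pnatr_eq0.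
have act m : g m = 0 -> (Mu^T *m z1) m 0 = 0.
  have [act _] := strict_compl_mul_eq0 (compl m) (sc m) (row4 m).
  by move=> /act/eqP; rewrite mulf_eq0 (negbTE two_neq0) => /eqP.
have cross m : (Mu^T *m z1) m 0 * w m 0 = 0.
  have [_ /eqP] := strict_compl_mul_eq0 (compl m) (sc m) (row4 m).
  by rewrite -mulrA mulf_eq0 (negbTE two_neq0) => /eqP.
apply/eqP/negPn/negP => nz.
have h_orth l : dotv (col_mx z1 z2) (grad_h Lm a l v) = 0.
  by rewrite dotv_grad_h row3 subrr mxE.
have g_orth m : g m = 0 -> dotv (col_mx z1 z2) (grad_g Ng Mm m v) = 0.
  by move=> /act gm0; rewrite dotv_grad_g gm0 mulr0.
have := sosc h_orth g_orth nz.
by rewrite bilin_hessL (bilin_Zmat_eq0 row1 row2 row3 cross) ltxx.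
Qed.

End SensitivityMatrix.

Theorem theorem1 (R : realFieldType) (Nb Ng L M P : nat)
  (hNb : (0 < Nb)%N) (hNg : (0 < Ng)%N) (hL : (0 < L)%N) (hM : (0 < M)%N)
  (hP : (0 < P)%N)
  (Lm : 'I_L -> 'M[R]_(2 * Nb)) (a : 'I_L -> 'cV[R]_(2 * Ng))
  (b : 'I_L -> 'cV[R]_P)
  (Mm : 'I_M -> 'M[R]_(2 * Nb)) (d : 'I_M -> 'cV[R]_P) (f : 'I_M -> R)
  (a0 : 'cV[R]_(2 * Ng)) (theta : 'cV[R]_P)
  (hLsym : forall l, (Lm l)^T = Lm l) (hMsym : forall m, (Mm m)^T = Mm m)
  (v : 'cV[R]_(2 * Nb)) (xg : 'cV[R]_(2 * Ng))
  (lam : 'I_L -> R) (mu : 'I_M -> R) :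
  locally_optimal Lm a b Mm d f a0 theta v xg ->
  KKT Lm a b Mm d f a0 theta v xg lam mu ->
  strict_compl Mm d f theta v mu ->
  SOSC Lm a Mm d f theta v lam mu ->
  forall n : 'cV[R]_((2 * Nb + 2 * Ng) + (L + M)),
    Smat Lm a Mm d f theta v lam mu *m n = 0 ->
    forall i : 'I_((2 * Nb + 2 * Ng) + (L + M)),
      (i < 2 * (Nb + Ng))%N -> n i 0 = 0.
Proof.
move=> _ [_ _ _ compl _] sc sosc n; rewrite -(vsubmxK n) => Sn i lt_i.
have z0 := Smat_null_primal_eq0 compl sc sosc Sn.
have lt_i' : (i < 2 * Nb + 2 * Ng)%N by rewrite mulnDr in lt_i.
have -> : i = lshift (L + M) (Ordinal lt_i') by apply: val_inj.
by rewrite col_mxEu z0 mxE.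
Qed.
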